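(* For a parking graph $P$ on $[n]$, let $\psi(P)\subseteq\mathbb{R}^n$ be the set of all $\mathbf{x}$ satisfying: $x_j-x_k\ge 1$ for every down edge $j\leftarrow k$ of $P$; $0\le x_j-x_k\le 1$ for every downish edge $jk$ of $P$ ($j<k$); and $x_j-x_k\le 0$ for every up edge $j\rightarrow k$ of $P$. Then for every parking graph $P$ the set $\psi(P)$ has nonempty interior and its interior is a region of the $n$-dimensional Shi arrangement; and the map sending $P$ to the interior of $\psi(P)$ is a bijection between the set of parking graphs on $[n]$ and the set of regions of the $n$-dimensional Shi arrangement.
   Context: The $n$-dimensional Shi arrangement is the set of hyperplanes in $\mathbb{R}^n$ given by $x_j-x_k=0$ and $x_j-x_k=1$ for all $1\le j<k\le n$. A region of it is a connected component of the complement in $\mathbb{R}^n$ of the union of these hyperplanes. A mixed graph may contain both undirected and directed edges. A parking graph $P$ on $[n]$ is a mixed graph with vertex set $[n]$ in which every pair $\{j,k\}$ with $1\le j<k\le n$ is joined by exactly one edge, which is of exactly one of three types: a down edge $j\leftarrow k$ (directed from $k$ to $j$), an up edge $j\rightarrow k$ (directed from $j$ to $k$), or a downish edge $jk$ (undirected). Let $\vec P$ be the directed graph obtained from $P$ by keeping all directed edges and replacing every downish edge $jk$ ($j<k$) by the directed edge $j\leftarrow k$. $P$ must satisfy the source-sink condition: (i) $\vec P$ is acyclic, and (ii) for every triangle of $P$ among whose three edges there is at least one down edge and at least one downish edge, the source (vertex of in-degree $0$ within the triangle in $\vec P$) and the sink (vertex of out-degree $0$ within the triangle in $\vec P$) are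 not joined by a downish edge in $P$. *)

From Stdlib Require Import Reals.
From mathcomp Require Import all_boot.
Set Implicit Arguments. Unset Strict Implicit. Unset Printing Implicit Defensive.

(* Points of R^n: coordinates indexed by 'I_n = {0,...,n-1} (standing for [n]). *)
Definition pt (n : nat) := 'I_n -> R.

(* ---------- Topology of R^n (sup-norm balls; same topology as Euclidean) ---------- *)
Definition Rn_ball n (x : pt n) (r : R) (y : pt n) : Prop :=
  forall i, Rlt (Rabs (Rminus (y i) (x i))) r.

Definition Rn_open n (U : pt n -> Prop) : Prop :=
  forall x, U x -> exists r, Rlt R0 r /\ forall y, Rn_ball x r y -> U y.

Definition Rn_interior n (S : pt n -> Prop) (x : pt n) : Prop :=
  exists r, Rlt R0 r /\ forall y, Rn_ball x r y -> S y.

Definition Rn_connected n (S : pt n -> Prop) : Prop :=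
  forall U V : pt n -> Prop, Rn_open U -> Rn_open V ->
    (forall x, S x -> U x \/ V x) ->
    (forall x, S x -> U x -> V x -> False) ->
    (exists x, S x /\ U x) -> (exists x, S x /\ V x) -> False.

Definition conn_component n (A C : pt n -> Prop) : Prop :=
  (forall x, C x -> A x) /\ (exists x, C x) /\ Rn_connected C /\
  (forall D : pt n -> Prop, (forall x, D x -> A x) -> Rn_connected D ->
     (forall x, C x -> D x) -> forall x, D x -> C x).

Definition shi_complement n (x : pt n) : Prop :=
  forall j k : 'I_n, (j < k)%N -> Rminus (x j) (x k) <> R0 /\ Rminus (x j) (x k) <> R1.

Definition shi_region n (C : pt n -> Prop) : Prop :=
  conn_component (@shi_complement n) C.

Definition same_set n (A B : pt n -> Prop) : Prop := forall x, A x <-> B x.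

(* Edge types for a pair j < k: Down = (j <- k), Up = (j -> k), Downish = undirected jk. *)
Inductive edge := Down | Up | Downish.

Definition isDown e := match e with Down => true | _ => false end.
Definition isUp e := match e with Up => true | _ => false end.
Definition isDownish e := match e with Downish => true | _ => false end.

(* A mixed complete graph on 'I_n: the edge between j < k is P j k.
   Values P j k with ~ (j < k) are irrelevant (ignored everywhere). *)
Definition mgraph (n : nat) := 'I_n -> 'I_n -> edge.

Definition lab n (P : mgraph n) (u v : 'I_n) : edge :=
  if (u < v)%N then P u v else P v u.

(* arc of vec P from u to v: up edges kept, down and downish edges point down *)
Definition arc n (P : mgraph n) : rel 'I_n := fun u v =>
  if (u < v)%N then isUp (P u v)
  else if (v < u)%N then ~~ isUp (P v u) else false.

Definition acyclic n (P : mgraph n) : Prop :=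
  forall u v : 'I_n, arc P u v -> ~~ connect (arc P) v u.

Definition triangle_cond n (P : mgraph n) : Prop :=
  forall a b c : 'I_n, (a < b)%N -> (b < c)%N ->
    let T := [:: a; b; c] in
    [|| isDown (P a b), isDown (P a c) | isDown (P b c)] ->
    [|| isDownish (P a b), isDownish (P a c) | isDownish (P b c)] ->
    forall s t : 'I_n, s \in T -> t \in T -> s != t ->
      (forall u, u \in T -> ~~ arc P u s) ->
      (forall u, u \in T -> ~~ arc P t u) ->
      ~~ isDownish (lab P s t).

Definition parking_graph n (P : mgraph n) : Prop := acyclic P /\ triangle_cond P.

Definition same_graph n (P Q : mgraph n) : Prop :=
  forall j k : 'I_n, (j < k)%N -> P j k = Q j k.

Definition psi n (P : mgraph n) (x : pt n) : Prop :=
  forall j k : 'I_n, (j < k)%N ->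
    match P j k with
    | Down => Rle R1 (Rminus (x j) (x k))
    | Downish => Rle R0 (Rminus (x j) (x k)) /\ Rle (Rminus (x j) (x k)) R1
    | Up => Rle (Rminus (x j) (x k)) R0
    end.

Arguments Rn_ball {n}. Arguments Rn_open {n}. Arguments Rn_interior {n}. Arguments Rn_connected {n}.
Arguments conn_component {n}. Arguments shi_complement {n}. Arguments shi_region {n}.
Arguments same_set {n}. Arguments psi {n}.

From Pilot Require Import Defs.
From Stdlib Require Import Reals Lra Lia Classical FunctionalExtensionality.
From mathcomp Require Import all_boot zify.
(* Re-import so that [arc] denotes [Defs.arc] rather than mathcomp's [path.arc]. *)
Import Pilot.Defs.
Set Implicit Arguments. Unset Strict Implicit. Unset Printing Implicit Defensive.
Local Open Scope R_scope.

(* The interior of psi(P) is the open polyhedron given by the strict inequalities.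
   It is convex, hence connected, it avoids all Shi hyperplanes, and it is clopen in
   their complement (off the hyperplanes, violating an edge constraint is an open
   condition), so it is a region as soon as it is nonempty.  A point x of a region
   determines the label of every pair, and the resulting graph is a parking graph
   whose cell is that region; this gives injectivity and surjectivity.
   Nonemptiness is the combinatorial core: vec P is a transitive tournament, i.e. a
   linear order, along which condition (ii) forbids a downish edge to span a down
   edge.  Placing the vertices one at a time along this order, the gap between two
   vertices must exceed 1 exactly when the interval between them contains a down
   edge, and these requirements on the new vertex are always compatible. *)

Definition R_open (Q : R -> Prop) : Prop :=
  forall d, Q d -> exists r, 0 < r /\ forall d', Rabs (d' - d) < r -> Q d'.

Lemma R_open_gt c : R_open (fun d => c < d).
Proof. by move=> d h; exists (d - c); split=> [|d' /Rabs_def2 [] ? ?]; lra. Qed.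

Lemma R_open_lt c : R_open (fun d => d < c).
Proof. by move=> d h; exists (c - d); split=> [|d' /Rabs_def2 [] ? ?]; lra. Qed.

Lemma R_open_and Q1 Q2 : R_open Q1 -> R_open Q2 -> R_open (fun d => Q1 d /\ Q2 d).
Proof.
move=> open1 open2 d [/open1 [r1 [r1_gt0 ball1]] /open2 [r2 [r2_gt0 ball2]]].
exists (Rmin r1 r2); split=> [|d' near]; first exact: Rmin_pos.
by split; [apply: ball1 | apply: ball2]; have := Rmin_l r1 r2; have := Rmin_r r1 r2; lra.
Qed.

Lemma R_open_or Q1 Q2 : R_open Q1 -> R_open Q2 -> R_open (fun d => Q1 d \/ Q2 d).
Proof.
move=> open1 open2 d [/open1 | /open2] [r [r_gt0 ball]]; exists r; split=> // d' near;
  [left | right]; exact: ball.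
Qed.

Definition edge_open (e : edge) (d : R) : Prop :=
  match e with
  | Down => 1 < d
  | Downish => 0 < d /\ d < 1
  | Up => d < 0
  end.

Definition edge_violated (e : edge) (d : R) : Prop :=
  match e with
  | Down => d < 1
  | Downish => d < 0 \/ 1 < d
  | Up => 0 < d
  end.

Definition edge_closed (e : edge) (d : R) : Prop :=
  match e with
  | Down => 1 <= d
  | Downish => 0 <= d /\ d <= 1
  | Up => d <= 0
  end.

Lemma R_open_edge_open e : R_open (edge_open e).
Proof.
case: e; [exact: R_open_gt | exact: R_open_lt |].
by apply: R_open_and; [exact: R_open_gt | exact: R_open_lt].
Qed.

Lemma R_open_edge_violated e : R_open (edge_violated e).
Proof.
case: e; [exact: R_open_lt | exact: R_open_gt |].
by apply: R_open_or; [exact: R_open_lt | exact: R_open_gt].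
Qed.

Lemma edge_open_or_violated e d : d <> 0 -> d <> 1 -> edge_open e d \/ edge_violated e d.
Proof.
move=> d_neq0 d_neq1; case: e => /=.
- by case: (Rlt_or_le 1 d); [left | right; lra].
- by case: (Rlt_or_le d 0); [left | right; lra].
- by case: (Rlt_or_le d 0); [right; left | case: (Rlt_or_le 1 d); [right; right | left; lra]].
Qed.

Lemma edge_open_violated e d : edge_open e d -> edge_violated e d -> False.
Proof. by case: e => /=; lra. Qed.

Lemma edge_open_closed e d : edge_open e d -> edge_closed e d.
Proof. by case: e => /=; lra. Qed.

Lemma edge_closed_shift e d r : 0 < r ->
  edge_closed e (d + r) -> edge_closed e (d - r) -> edge_open e d.
Proof. by case: e => /=; lra. Qed.

Lemma edge_open_neq e d : edge_open e d -> d <> 0 /\ d <> 1.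
Proof. by case: e => /=; lra. Qed.

Lemma edge_open_convex e u v t : edge_open e u -> edge_open e v -> 0 <= t <= 1 ->
  edge_open e ((1 - t) * u + t * v).
Proof.
have above c u' v' t' : c < u' -> c < v' -> 0 <= t' <= 1 -> c < (1 - t') * u' + t' * v'.
  by move=> *; case: (Rle_lt_dec t' (1/2)) => ?; nra.
have below c u' v' t' : u' < c -> v' < c -> 0 <= t' <= 1 -> (1 - t') * u' + t' * v' < c.
  by move=> *; have := above (- c) (- u') (- v') t'; lra.
case: e => /=; [exact: above | exact: below |].
by move=> [? ?] [? ?] ?; split; [exact: above | exact: below].
Qed.

Lemma fin_min_radius (I : finType) (F : I -> R -> Prop) :
  (forall i r r', 0 < r' -> r' <= r -> F i r -> F i r') ->
  (forall i, exists r, 0 < r /\ F i r) -> exists r, 0 < r /\ forall i, F i r.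
Proof.
move=> F_mono F_ex.
suff [r [r_gt0 Fr]] : exists r, 0 < r /\ forall i, i \in enum I -> F i r.
  by exists r; split=> // i; apply: Fr; rewrite mem_enum.
elim: (enum I) => [|a s [r [r_gt0 Fr]]]; first by exists 1; split=> //; lra.
have [ra [ra_gt0 Fa]] := F_ex a; exists (Rmin r ra); split=> [|i]; first exact: Rmin_pos.
rewrite in_cons => /orP [/eqP -> | /Fr]; apply: F_mono;
  by [exact: Rmin_pos | exact: Rmin_r | exact: Rmin_l | ].
Qed.

Lemma fin_argmax (I : finType) (p : pred I) (f : I -> R) i0 : p i0 ->
  exists i, p i /\ forall j, p j -> f j <= f i.
Proof.
move=> p_i0.
suff [i [p_i max_i]] : exists i, p i /\ forall j, j \in enum I -> p j -> f j <= f i.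
  by exists i; split=> // j; apply: max_i; rewrite mem_enum.
elim: (enum I) => [|a s [i [p_i max_i]]]; first by exists i0.
case: (boolP (p a)) => [p_a | not_p_a]; last first.
  exists i; split=> // j; rewrite inE => /orP [/eqP -> p_a | /max_i //].
  by rewrite p_a in not_p_a.
case: (Rle_lt_dec (f a) (f i)) => fa.
  by exists i; split=> // j; rewrite inE => /orP [/eqP -> | /max_i].
exists a; split=> // j; rewrite inE => /orP [/eqP -> _ | /max_i le_i p_j]; first lra.
by have := le_i p_j; lra.
Qed.

Lemma separating_point (I : finType) (pl ph : pred I) (lo hi : I -> R) :
  (forall i j, pl i -> ph j -> lo i < hi j) ->
  exists t, (forall i, pl i -> lo i < t) /\ (forall j, ph j -> t < hi j).
Proof.
move=> lo_hi.
case: (pickP pl) => [i0 pl_i0 | no_lo]; case: (pickP ph) => [j0 ph_j0 | no_hi].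
- have [i [pl_i max_i]] := fin_argmax lo pl_i0.
  have [j [ph_j min_j]] := fin_argmax (fun j => - hi j) ph_j0.
  have := lo_hi i j pl_i ph_j.
  by exists ((lo i + hi j) / 2); split=> k /[dup] ? => [/max_i | /min_j]; lra.
- have [i [pl_i max_i]] := fin_argmax lo pl_i0.
  by exists (lo i + 1); split=> k; [move/max_i; lra | rewrite no_hi].
- have [j [ph_j min_j]] := fin_argmax (fun j => - hi j) ph_j0.
  by exists (hi j - 1); split=> k; [rewrite no_lo | move/min_j; lra].
- by exists 0; split=> k; [rewrite no_lo | rewrite no_hi].
Qed.

Section Topology.
Variable n : nat.

Lemma Rn_open_forall (I : finType) (U : I -> pt n -> Prop) :
  (forall i, Rn_open (U i)) -> Rn_open (fun y => forall i, U i y).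
Proof.
move=> U_open x Ux.
have [|r [r_gt0 ball]] := @fin_min_radius I (fun i r => forall y, Rn_ball x r y -> U i y)
  _ (fun i => U_open i x (Ux i)).
  by move=> i r r' _ r'_le ball y near; apply: ball => j; have := near j; lra.
by exists r; split=> // y near i; exact: ball.
Qed.

Lemma Rn_open_implies (b : bool) (U : pt n -> Prop) :
  Rn_open U -> Rn_open (fun y => b -> U y).
Proof.
case: b => U_open x Ux; last by exists 1; split=> //; lra.
have [r [r_gt0 ball]] := U_open x (Ux isT); by exists r; split=> // y /ball.
Qed.

Lemma Rn_open_diff (Q : R -> Prop) (j k : 'I_n) :
  R_open Q -> Rn_open (fun y => Q (y j - y k)).
Proof.
move=> Q_open x /Q_open [r [r_gt0 ball]]; exists (r / 2); split=> [|y near]; first lra.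
apply: ball; move: (near j) (near k) => /Rabs_def2 [? ?] /Rabs_def2 [? ?].
by apply: Rabs_def1; lra.
Qed.

Definition psi_open (P : mgraph n) (x : pt n) : Prop :=
  forall j k : 'I_n, (j < k)%N -> edge_open (P j k) (x j - x k).

Lemma Rn_open_psi_open P : Rn_open (psi_open P).
Proof.
do 2![apply: Rn_open_forall => ?]; apply: Rn_open_implies.
exact/Rn_open_diff/R_open_edge_open.
Qed.

Definition shift_coord (x : pt n) (j : 'I_n) (d : R) : pt n :=
  fun i => if i == j then x j + d else x i.

Lemma Rn_ball_shift_coord x j d r : 0 < r -> Rabs d < r -> Rn_ball x r (shift_coord x j d).
Proof.
move=> r_gt0 d_lt i; rewrite /shift_coord; case: eqP => [->|_].
  by rewrite Rplus_minus_l.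
by rewrite Rminus_diag Rabs_R0.
Qed.

Lemma Rn_interior_psi P x : Rn_interior (psi P) x <-> psi_open P x.
Proof.
split=> [[r [r_gt0 ball]] j k jk | x_open].
  have k_neq_j : k != j by rewrite neq_ltn jk orbT.
  have shifted d : Rabs d < r -> edge_closed (P j k) (x j - x k + d).
    move=> /(Rn_ball_shift_coord x j r_gt0) /ball /(_ j k jk).
    by rewrite /shift_coord eqxx (negbTE k_neq_j) -Rplus_minus_swap.
  apply: (@edge_closed_shift _ _ (r / 2)); first lra.
    by apply: shifted; rewrite Rabs_right; lra.
  by rewrite /Rminus; apply: shifted; rewrite Rabs_Ropp Rabs_right; lra.
have [r [r_gt0 ball]] := Rn_open_psi_open x_open.
by exists r; split=> // y /ball y_open j k jk; exact/edge_open_closed/y_open.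
Qed.

Definition seg (a b : pt n) (t : R) : pt n := fun i => a i + t * (b i - a i).

Lemma seg0 a b : seg a b 0 = a.
Proof. by apply: functional_extensionality => i; rewrite /seg; ring. Qed.

Lemma seg1 a b : seg a b 1 = b.
Proof. by apply: functional_extensionality => i; rewrite /seg; ring. Qed.

Definition Rn_convex (S : pt n -> Prop) : Prop :=
  forall a b t, S a -> S b -> 0 <= t <= 1 -> S (seg a b t).

Lemma psi_open_convex P : Rn_convex (psi_open P).
Proof.
move=> a b t a_open b_open t01 j k jk.
have -> : seg a b t j - seg a b t k = (1 - t) * (a j - a k) + t * (b j - b k).
  by rewrite /seg; ring.
exact: edge_open_convex (a_open j k jk) (b_open j k jk) t01.
Qed.

Lemma R_open_seg_preimage a b (U : pt n -> Prop) :
  Rn_open U -> R_open (fun t => U (seg a b t)).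
Proof.
move=> U_open c /U_open [r [r_gt0 ball]].
have coord_near i : exists d, 0 < d /\
    forall s, Rabs (s - c) < d -> Rabs (seg a b s i - seg a b c i) < r.
  set m := Rabs (b i - a i); have m_ge0 : 0 <= m by apply: Rabs_pos.
  exists (r / (m + 1)); split=> [|s s_near]; first by apply: Rdiv_lt_0_compat; lra.
  have -> : seg a b s i - seg a b c i = (s - c) * (b i - a i) by rewrite /seg; ring.
  rewrite Rabs_mult -/m.
  have : Rabs (s - c) * (m + 1) < r / (m + 1) * (m + 1) by apply: Rmult_lt_compat_r; lra.
  rewrite /Rdiv Rmult_assoc Rinv_l ?Rmult_1_r; last lra.
  by have := Rabs_pos (s - c); nra.
have [|d [d_gt0 near]] := fin_min_radius _ coord_near.
  by move=> i d d' _ d'_le near s s_near; apply: near; lra.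
by exists d; split=> // s /near s_near; apply: ball.
Qed.

Lemma unit_interval_connected (A B : R -> Prop) : R_open A -> R_open B ->
  (forall t, 0 <= t <= 1 -> A t \/ B t) -> (forall t, 0 <= t <= 1 -> A t -> B t -> False) ->
  A 0 -> B 1 -> False.
Proof.
move=> A_open B_open cover disj A0 B1.
pose E t := 0 <= t <= 1 /\ forall s, 0 <= s <= t -> A s.
have E0 : E 0 by split=> [|s s0]; [lra | have -> : s = 0 by lra].
have E_bound : bound E by exists 1 => t [[_ ?] _].
have [c [c_ub c_lub]] := @completeness E E_bound (ex_intro _ 0 E0).
have c0 : 0 <= c by apply: c_ub.
have c1 : c <= 1 by apply: c_lub => t [[_ ?] _].
have approx d : 0 < d -> exists t, E t /\ c - d < t.
  move=> d_gt0; apply: NNPP => none; suff : c <= c - d by lra.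
  by apply: c_lub => t Et; apply: Rnot_lt_le => ?; apply: none; exists t.
case: (cover c (conj c0 c1)) => [/A_open | /B_open] [r [r_gt0 ball]];
  have [t [[t01 At] t_near]] := approx r r_gt0; have t_le := c_ub t (conj t01 At).
- case: (Rle_lt_dec (c + r / 2) 1) => c_r.
  + suff : c + r / 2 <= c by lra.
    apply: c_ub; split=> [|s s01]; first lra.
    case: (Rle_lt_dec s t) => s_t; first by apply: At; lra.
    by apply: ball; apply: Rabs_def1; lra.
  + by apply: (disj 1); [lra | apply: ball; apply: Rabs_def1; lra | ].
- by apply: (disj t t01); [apply: At; lra | apply: ball; apply: Rabs_def1; lra].
Qed.

Lemma convex_connected (S : pt n -> Prop) : Rn_convex S -> Rn_connected S.
Proof.
move=> S_convex U V U_open V_open cover disj [a [Sa Ua]] [b [Sb Vb]].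
apply: (@unit_interval_connected (fun t => U (seg a b t)) (fun t => V (seg a b t))).
- exact: R_open_seg_preimage.
- exact: R_open_seg_preimage.
- by move=> t t01; apply/cover/S_convex.
- by move=> t t01; apply/disj/S_convex.
- by rewrite seg0.
- by rewrite seg1.
Qed.

Lemma Rn_connected_ext (S T : pt n -> Prop) : same_set S T -> Rn_connected S -> Rn_connected T.
Proof.
move=> ST S_conn U V U_open V_open cover disj [x [Tx Ux]] [y [Ty Vy]].
apply: (S_conn U V) => //.
- by move=> z /ST; exact: cover.
- by move=> z /ST; exact: disj.
- by exists x; split=> //; apply/ST.
- by exists y; split=> //; apply/ST.
Qed.

Lemma conn_component_ext (A S T : pt n -> Prop) :
  same_set S T -> conn_component A S -> conn_component A T.
Proof.
move=> ST [SA [[x Sx] [S_conn S_max]]]; split; [|split; [|split]].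
- by move=> y /ST /SA.
- by exists x; apply/ST.
- exact: Rn_connected_ext S_conn.
- by move=> D DA D_conn TD y /(S_max D DA D_conn (fun z Sz => TD z (proj1 (ST z) Sz))) /ST.
Qed.

Lemma psi_open_shi_complement P x : psi_open P x -> shi_complement x.
Proof. by move=> x_open j k /x_open /edge_open_neq. Qed.

(* The cell [psi_open P] is relatively clopen in the complement of the arrangement:
   outside it, some edge constraint is violated, which is an open condition. *)
Lemma psi_open_absorbs P (D : pt n -> Prop) : Rn_connected D ->
  (forall x, D x -> shi_complement x) -> (exists x, D x /\ psi_open P x) ->
  forall z, D z -> psi_open P z.
Proof.
move=> D_conn D_compl [x [Dx x_open]] z Dz.
pose V y := exists j k : 'I_n, (j < k)%N /\ edge_violated (P j k) (y j - y k).
have open_or_V y : D y -> psi_open P y \/ V y.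
  move=> Dy; case: (classic (V y)) => [|notV]; [by right | left => j k jk].
  have [neq0 neq1] := D_compl y Dy j k jk.
  case: (edge_open_or_violated (P j k) neq0 neq1) => // viol.
  by case: notV; exists j, k.
apply: NNPP => z_not_open; apply: (D_conn (psi_open P) V).
- exact: Rn_open_psi_open.
- move=> y [j [k [jk viol]]].
  have [r [r_gt0 ball]] := @Rn_open_diff _ j k (@R_open_edge_violated (P j k)) y viol.
  by exists r; split=> // y' /ball ?; exists j, k.
- exact: open_or_V.
- by move=> y _ y_open [j [k [jk]]]; apply/edge_open_violated/y_open.
- by exists x.
- by exists z; split=> //; case: (open_or_V z Dz).
Qed.

Lemma shi_region_psi_open P : (exists x, psi_open P x) -> shi_region (psi_open P).
Proof.
move=> [x x_open]; split; [|split; [|split]].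
- exact: psi_open_shi_complement.
- by exists x.
- exact/convex_connected/psi_open_convex.
- move=> D D_compl D_conn sub; apply: psi_open_absorbs => //.
  by exists x; split=> //; apply: sub.
Qed.

Lemma shi_region_psi_open_eq P (C : pt n -> Prop) : shi_region C ->
  (exists x, C x /\ psi_open P x) -> same_set (psi_open P) C.
Proof.
move=> [C_compl [_ [C_conn C_max]]] meet y; split; last exact: psi_open_absorbs.
apply: C_max; first exact: psi_open_shi_complement.
  exact/convex_connected/psi_open_convex.
exact: psi_open_absorbs.
Qed.

Lemma psi_open_same_graph P Q x : psi_open P x -> psi_open Q x -> same_graph P Q.
Proof.
move=> P_open Q_open j k jk; move: (P_open j k jk) (Q_open j k jk).
by case: (P j k); case: (Q j k) => //= ? ?; lra.
Qed.

End Topology.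

Lemma ord3_sort n (u v w : 'I_n) : u != v -> v != w -> u != w ->
  exists a b c : 'I_n, [/\ (a < b)%N, (b < c)%N & [:: u; v; w] =i [:: a; b; c]].
Proof.
rewrite -!(inj_eq val_inj) !neq_ltn.
move=> /orP [] uv /orP [] vw /orP [] uw; try (exfalso; lia).
1: exists u, v, w. 2: exists u, w, v. 3: exists w, u, v.
4: exists v, u, w. 5: exists v, w, u. 6: exists w, v, u.
all: split=> // y; rewrite !inE; by case: (y == u); case: (y == v); case: (y == w).
Qed.

Section ParkingGraph.
Variables (n : nat) (P : mgraph n).

Lemma arc_irrefl u : arc P u u = false.
Proof. by rewrite /arc ltnn. Qed.

Lemma arc_neq u v : arc P u v -> u != v.
Proof. by apply: contraTneq => ->; rewrite arc_irrefl. Qed.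

Lemma arc_total u v : u != v -> arc P u v || arc P v u.
Proof.
rewrite /arc; case: ltngtP => [_ | _ | /val_inj ->]; last by rewrite eqxx.
  by case: isUp.
by case: isUp.
Qed.

Lemma arc_up u v : arc P u v -> isUp (lab P u v) = (u < v)%N.
Proof. by rewrite /arc /lab; case: ltngtP => // _ /negbTE. Qed.

Lemma lab_in_triangle (f : pred edge) (a b c p q : 'I_n) : (a < b)%N -> (b < c)%N ->
  p \in [:: a; b; c] -> q \in [:: a; b; c] -> p != q -> f (lab P p q) ->
  [|| f (P a b), f (P a c) | f (P b c)].
Proof.
move=> ab bc; have ac := ltn_trans ab bc.
rewrite !inE => /or3P [] /eqP -> /or3P [] /eqP -> //; rewrite ?eqxx //= => _;
  rewrite /lab ?ab ?bc ?ac ?(ltnNge b a) ?(ltnNge c a) ?(ltnNge c b)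
    ?(ltnW ab) ?(ltnW bc) ?(ltnW ac) /= => ->; rewrite ?orbT //.
Qed.

Hypothesis P_acyclic : acyclic P.

Lemma arc_asym u v : arc P u v -> ~~ arc P v u.
Proof. by move=> uv; apply/negP => vu; have := P_acyclic uv; rewrite connect1. Qed.

Lemma arc_trans u v w : arc P u v -> arc P v w -> arc P u w.
Proof.
move=> uv vw; have u_neq_w : u != w.
  by apply: contraTneq vw => <-; exact: arc_asym.
case/orP: (arc_total u_neq_w) => // wu.
by have := P_acyclic uv; rewrite (connect_trans (connect1 vw) (connect1 wu)).
Qed.

Hypothesis P_triangle : triangle_cond P.

(* Condition (ii) read along the linear order of [vec P]: a downish edge never
   spans a down edge. *)
Lemma downish_not_over_down u v w : arc P u v -> arc P v w ->
  isDown (lab P u v) || isDown (lab P v w) -> ~~ isDownish (lab P u w).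
Proof.
move=> uv vw down; have uw := arc_trans uv vw.
have [a [b [c [ab bc sorted]]]] := ord3_sort (arc_neq uv) (arc_neq vw) (arc_neq uw).
have in_abc y : y \in [:: u; v; w] -> y \in [:: a; b; c] by rewrite sorted.
have [u_in v_in w_in] : [/\ u \in [:: u; v; w], v \in [:: u; v; w] & w \in [:: u; v; w]].
  by rewrite !inE !eqxx !orbT.
apply/negP => downish.
have down_abc : [|| isDown (P a b), isDown (P a c) | isDown (P b c)].
  case/orP: down => [d_uv | d_vw].
    exact: lab_in_triangle ab bc (in_abc _ u_in) (in_abc _ v_in) (arc_neq uv) d_uv.
  exact: lab_in_triangle ab bc (in_abc _ v_in) (in_abc _ w_in) (arc_neq vw) d_vw.
have downish_abc := lab_in_triangle ab bc (in_abc _ u_in) (in_abc _ w_in) (arc_neq uw) downish.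
have source y : y \in [:: a; b; c] -> ~~ arc P y u.
  by rewrite -sorted !inE => /or3P [] /eqP ->; [rewrite arc_irrefl | exact: arc_asym..].
have sink y : y \in [:: a; b; c] -> ~~ arc P w y.
  by rewrite -sorted !inE => /or3P [] /eqP ->; [exact: arc_asym.. | rewrite arc_irrefl].
have := P_triangle ab bc down_abc downish_abc (in_abc _ u_in) (in_abc _ w_in) (arc_neq uw).
by move=> /(_ source sink); rewrite downish.
Qed.

(* [vec P] is a linear order; [covers_down w u] says that the interval from [w]
   to [u] of this order contains both ends of some down edge. *)
Definition covers_down (w u : 'I_n) : bool :=
  [exists a, [exists b, [&& (a == w) || arc P w a, arc P a b, isDown (lab P a b)
                           & (b == u) || arc P b u]]].

Lemma covers_down_arcl w' w u : arc P w' w -> covers_down w u -> covers_down w' u.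
Proof.
move=> w'w /existsP [a /existsP [b /and4P [wa ab down bu]]].
apply/existsP; exists a; apply/existsP; exists b; rewrite ab down bu andbT /=.
by case/orP: wa => [/eqP -> | /(arc_trans w'w) ->]; rewrite ?w'w orbT.
Qed.

Lemma covers_down_arcr w u u' : arc P u u' -> covers_down w u -> covers_down w u'.
Proof.
move=> uu' /existsP [a /existsP [b /and4P [wa ab down bu]]].
apply/existsP; exists a; apply/existsP; exists b; rewrite wa ab down /=.
by case/orP: bu => [/eqP -> | bu]; rewrite ?uu' ?(arc_trans bu uu') orbT.
Qed.

(* The four endpoints would have to satisfy [j < k < b < a < j]. *)
Lemma downish_not_covers_down k j : arc P k j -> isDownish (lab P k j) -> ~~ covers_down k j.
Proof.
move=> kj downish; apply/negP => /existsP [a /existsP [b /and4P [ka ab down bj]]].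
have spans u v w : arc P u v -> arc P v w ->
    isDown (lab P u v) || isDown (lab P v w) -> isDownish (lab P u w) -> False.
  by move=> uv vw /(downish_not_over_down uv vw) /negP.
case/orP: ka => [/eqP ak | ka]; case/orP: bj => [/eqP bj | bj].
- by subst; move: down downish; case: lab.
- by subst a; apply: (spans k b j); rewrite ?down.
- by subst b; apply: (spans k a j); rewrite ?down ?orbT.
have kb := arc_trans ka ab; have aj := arc_trans ab bj.
have not_up u v : arc P u v -> ~~ isUp (lab P u v) -> (v < u)%N.
  move=> uv; rewrite (arc_up uv) ltnNge negbK; have := arc_neq uv.
  by rewrite -(inj_eq val_inj) /=; lia.
have jk : (j < k)%N by apply: not_up => //; case: lab downish.
have ba : (b < a)%N by apply: not_up => //; case: lab down.
have kb_up : (k < b)%N.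
  rewrite -(arc_up kb); case lab_kb: (lab P k b) => //.
  - by case: (spans k b j); rewrite ?lab_kb.
  - by case: (spans k a b); rewrite ?down ?lab_kb ?orbT.
have aj_up : (a < j)%N.
  rewrite -(arc_up aj); case lab_aj: (lab P a j) => //.
  - by case: (spans k a j); rewrite ?lab_aj ?orbT.
  - by case: (spans a b j); rewrite ?down ?lab_aj.
lia.
Qed.

Definition rank (u : 'I_n) : nat := #|[set v | arc P v u]|.

Lemma rank_arc_lt u v : arc P u v -> (rank u < rank v)%N.
Proof.
move=> uv; apply/proper_card/properP; split.
  by apply/subsetP => w; rewrite !inE => /arc_trans; apply.
by exists u; rewrite !inE ?arc_irrefl.
Qed.

Lemma rank_ltn u : (rank u < n)%N.
Proof.
rewrite -[n]card_ord -cardsT; apply/proper_card/properP; split; first exact: subsetT.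
by exists u; rewrite !inE ?arc_irrefl.
Qed.

Lemma rank_inj : injective rank.
Proof.
move=> u v eq_uv; apply/eqP; apply: contraT => /arc_total /orP [] /rank_arc_lt;
  by rewrite eq_uv ltnn.
Qed.

Lemma arc_rank_lt w u : (rank w < rank u)%N -> arc P w u.
Proof.
move=> lt_wu; have /arc_total : w != u by apply: contraTneq lt_wu => ->; rewrite ltnn.
by case/orP => // /rank_arc_lt; rewrite ltnNge ltnW.
Qed.

Definition embeds_below (k : nat) (x : pt n) : Prop :=
  forall w u, (rank w < k)%N -> (rank u < k)%N -> arc P w u ->
    x w < x u /\ (if covers_down w u then 1 < x u - x w else x u - x w < 1).

(* The new vertex [m] must lie above every earlier [x w] (above [x w + 1] when [w]
   covers a down edge below [m]), and below [x w + 1] when [w] does not. *)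
Lemma embeds_below_succ k x : embeds_below k x -> exists x', embeds_below k.+1 x'.
Proof.
move=> x_emb; case: (pickP (fun m => rank m == k)) => [m /eqP rank_m | no_rank_k]; last first.
  exists x => w u; rewrite !ltnS => w_le u_le.
  by apply: x_emb; rewrite ltn_neqAle ?w_le ?u_le andbT; exact/negbT/no_rank_k.
have below_m w : (rank w < k)%N -> arc P w m by rewrite -rank_m; exact: arc_rank_lt.
have lo_hi w w' : (rank w < k)%N -> (rank w' < k)%N && ~~ covers_down w' m ->
    x w + (if covers_down w m then 1 else 0) < x w' + 1.
  move=> w_lt /andP [w'_lt not_cov]; case: (eqVneq w w') => [-> | w_neq].
    by rewrite (negbTE not_cov); lra.
  case/orP: (arc_total w_neq) => [ww' | w'w].
    by have [? _] := x_emb w w' w_lt w'_lt ww'; case: covers_down; lra.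
  have -> : covers_down w m = false.
    by apply: contraNF not_cov; exact: covers_down_arcl.
  have /negbTE cov_w'w : ~~ covers_down w' w.
    by apply: contraNN not_cov; apply: covers_down_arcr; exact: below_m.
  by have [_] := x_emb w' w w'_lt w_lt w'w; rewrite cov_w'w; lra.
have [t [t_lo t_hi]] := separating_point lo_hi.
exists (fun i => if i == m then t else x i) => w u; rewrite !ltnS => w_le u_le wu /=.
have lt_k v : (rank v <= k)%N -> v != m -> (rank v < k)%N.
  move=> v_le v_neq; rewrite ltn_neqAle v_le andbT -rank_m.
  by apply: contra v_neq => /eqP /rank_inj ->.
case: (eqVneq w m) => [wm | w_neq]; case: (eqVneq u m) => [um | u_neq].
- by move: wu; rewrite wm um arc_irrefl.
- by have := rank_arc_lt wu; rewrite wm rank_m ltnNge u_le.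
- have w_lt := lt_k w w_le w_neq.
  move: (t_lo w w_lt) (t_hi w); rewrite um w_lt /=.
  by case: covers_down => /= lo hi; [| have := hi isT]; split; lra.
- by apply: x_emb wu; exact: lt_k.
Qed.

Lemma embeds_below_exists k : exists x, embeds_below k x.
Proof.
elim: k => [|k [x /embeds_below_succ //]].
by exists (fun _ => 0) => w u.
Qed.

Lemma psi_open_nonempty : exists x, psi_open P x.
Proof.
have [x x_emb] := embeds_below_exists n.
exists x => j k jk; have kj : (k < j)%N = false by rewrite ltnNge ltnW.
have emb := x_emb _ _ (rank_ltn _) (rank_ltn _).
case Pjk: (P j k) => /=.
- have kj_arc : arc P k j by rewrite /arc kj jk Pjk.
  have cov : covers_down k j.
    apply/existsP; exists k; apply/existsP; exists j.
    by rewrite eqxx kj_arc /lab kj Pjk eqxx.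
  by have [_] := emb _ _ kj_arc; rewrite cov.
- have jk_arc : arc P j k by rewrite /arc jk Pjk.
  by have [? _] := emb _ _ jk_arc; lra.
- have kj_arc : arc P k j by rewrite /arc kj jk Pjk.
  have downish : isDownish (lab P k j) by rewrite /lab kj Pjk.
  have [?] := emb _ _ kj_arc.
  by rewrite (negbTE (downish_not_covers_down kj_arc downish)); lra.
Qed.

End ParkingGraph.

Definition graph_of n (x : pt n) : mgraph n := fun j k =>
  if Rlt_dec 1 (x j - x k) then Down else if Rlt_dec 0 (x j - x k) then Downish else Up.

Section GraphOf.
Variables (n : nat) (x : pt n).
Hypothesis x_compl : shi_complement x.

Lemma psi_open_graph_of : psi_open (graph_of x) x.
Proof.
move=> j k jk; have [? ?] := x_compl jk; rewrite /graph_of.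
by case: Rlt_dec => ? /=; [| case: Rlt_dec => ? /=; [split |]]; lra.
Qed.

Lemma arc_graph_of u v : arc (graph_of x) u v <-> x u < x v.
Proof.
rewrite /arc /graph_of; case: ltngtP => [uv | vu | /val_inj ->]; last by split=> //; lra.
  have [? _] := x_compl uv; case: Rlt_dec => ? /=; first by split=> // ?; exfalso; lra.
  by case: Rlt_dec => ? /=; split=> // ?; [exfalso |]; lra.
have [? _] := x_compl vu; case: Rlt_dec => ? /=; first by split=> // _; lra.
by case: Rlt_dec => ? /=; split=> // ?; [| exfalso]; lra.
Qed.

Lemma parking_graph_of : parking_graph (graph_of x).
Proof.
split.
  move=> u v /arc_graph_of uv; apply/negP => /connectP [p p_path p_last].
  suff : x v <= x (last v p) by rewrite -p_last; lra.
  elim: p v p_path {uv p_last} => [|w p IH] v /=; first lra.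
  by case/andP => /arc_graph_of vw /IH; lra.
move=> a b c _ _ /= down _ s t s_in t_in _ source sink; apply/negP => downish.
have s_min y : y \in [:: a; b; c] -> x s <= x y.
  by move=> /source /negP not_arc; apply: Rnot_lt_le => /arc_graph_of /not_arc.
have t_max y : y \in [:: a; b; c] -> x y <= x t.
  by move=> /sink /negP not_arc; apply: Rnot_lt_le => /arc_graph_of /not_arc.
have st_le1 : x t - x s <= 1.
  move: downish; rewrite /lab /graph_of; have := s_min t t_in.
  by case: ifP => _; do 2!case: Rlt_dec => ? //=; lra.
have down_gt1 j k : isDown (graph_of x j k) -> 1 < x j - x k.
  by rewrite /graph_of; do 2!case: Rlt_dec.
have [a_in b_in c_in] : [/\ a \in [:: a; b; c], b \in [:: a; b; c] & c \in [:: a; b; c]].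
  by rewrite !inE !eqxx !orbT.
case/or3P: down => /down_gt1.
- by have := t_max a a_in; have := s_min b b_in; lra.
- by have := t_max a a_in; have := s_min c c_in; lra.
- by have := t_max b b_in; have := s_min c c_in; lra.
Qed.

End GraphOf.

Theorem theorem2p1 (n : nat) :
  (forall P : mgraph n, parking_graph P ->
     (exists x : pt n, Rn_interior (psi P) x) /\ shi_region (Rn_interior (psi P))) /\
  (forall P Q : mgraph n, parking_graph P -> parking_graph Q ->
     same_set (Rn_interior (psi P)) (Rn_interior (psi Q)) -> same_graph P Q) /\
  (forall C : pt n -> Prop, shi_region C ->
     exists P : mgraph n, parking_graph P /\ same_set (Rn_interior (psi P)) C).
Proof.
have interior_psi (P : mgraph n) : same_set (psi_open P) (Rn_interior (psi P)).
  by move=> x; rewrite Rn_interior_psi.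
split; [|split].
- move=> P [P_acyclic P_triangle]; have [x x_open] := psi_open_nonempty P_acyclic P_triangle.
  split; first by exists x; apply/Rn_interior_psi.
  exact: conn_component_ext (interior_psi P) (shi_region_psi_open (ex_intro _ x x_open)).
- move=> P Q [P_acyclic P_triangle] _ PQ.
  have [x x_open] := psi_open_nonempty P_acyclic P_triangle.
  by apply: (psi_open_same_graph x_open); apply/Rn_interior_psi/PQ/Rn_interior_psi.
- move=> C C_region; have [C_compl [[x Cx] _]] := C_region.
  exists (graph_of x); split; first exact: parking_graph_of (C_compl x Cx).
  move=> y; rewrite Rn_interior_psi; apply: shi_region_psi_open_eq => //.
  by exists x; split=> //; exact: psi_open_graph_of (C_compl x Cx).
Qed.
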